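(* Let $G=\mathrm{GL}_n$ or $\mathrm{GSp}_{2n}$ and let $M\supset A$ be the Levi subgroup of a standard parabolic subgroup. Let $\nu\in X_{M,\mathbf Q}\cap X_*(A)_{\mathbf Q,\mathrm{dom}}$ be such that its image under $\kappa_M\otimes\mathbf Q$ lies in $\pi_1(M)$. Let $\tilde\nu\in X_*(A)$ be the unique $M$-dominant $M$-minuscule element with $\kappa_M(\tilde\nu)=\kappa_M(\nu)$, and let $[\tilde\nu]$ be the unique $G$-dominant element of $W\tilde\nu$. Then for every $\mu\in X_*(A)_{\mathrm{dom}}$ with $\nu\le\mu$ we have $\nu\le[\tilde\nu]\le\mu$.
   Context: $G=\mathrm{GL}_n$ or $\mathrm{GSp}_{2n}$ over a $p$-adic field, with diagonal maximal split torus $A$, standard Borel $B\supset A$, Weyl group $W$; $X_*(A)$ the cocharacter group ($\mathbf Z^n$, resp. $\{\mu\in\mathbf Z^{2n}:\mu_i+\mu_{2n+1-i}$ constant$\}$). Dominant means $B$-dominant (non-increasing entries); $X_*(A)_{\mathrm{dom}}$, $X_*(A)_{\mathbf Q,\mathrm{dom}}$ denote dominant elements of $X_*(A)$, $X_*(A)\otimes\mathbf Q$. $\nu\le\mu$ means $\mu-\nu$ is a non-negative linear combination of positive coroots. Standard Levi subgroups: block diagonal $M_{(m_1,\dots,m_r)}$ for $\mathrm{GL}_n$, intersection of $\mathrm{GSp}_{2n}$ with $M_{(m_1,\dots,m_r,2j,m_r,\dots,m_1)}$ for $\mathrm{GSp}_{2n}$. $A_M$ is the maximal split torus in the center of $M$,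 $X_M=X_*(A_M)\subset X_*(A)$, $X_{M,\mathbf Q}=X_M\otimes\mathbf Q$. $\pi_1(M)=X_*(A)/(\text{coroot lattice of }M)$ (a free abelian group), $\kappa_M:X_*(A)\to\pi_1(M)$ the projection. An element is $M$-dominant if dominant for $B\cap M$, and $M$-minuscule if $\langle\tilde\nu,\alpha\rangle\in\{0,\pm1\}$ for all roots $\alpha$ of $M$; the $M$-dominant $M$-minuscule elements map bijectively onto $\pi_1(M)$. *)

From mathcomp Require Import all_boot all_order all_algebra all_fingroup.
Set Implicit Arguments. Unset Strict Implicit. Unset Printing Implicit Defensive.
Import Order.TTheory GRing.Theory Num.Theory.
Local Open Scope ring_scope.

Inductive grp := GL of nat | GSp of nat.

Definition rankG (G : grp) : nat := match G with GL n => n | GSp n => n end.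
Definition dimG (G : grp) : nat := match G with GL n => n | GSp n => (n + n)%N end.
Definition is_sp (G : grp) : bool := if G is GSp _ then true else false.

(* vectors in X_*(A) (x) Q, sitting in Q^{dimG G} (diagonal coordinates) *)
Notation vec G := 'rV[rat]_(dimG G).
Definition co (G : grp) (v : vec G) (a : 'I_(dimG G)) : rat := v 0 a.

Definition ev (G : grp) (a : 'I_(dimG G)) : vec G := delta_mx 0 a.

(* The coroot of the root of G whose root space is the matrix entry (a,b),
   a <> b.  For GSp_{2n} (antidiagonal form), a' := rev_ord a = 2n-1-a, and the
   root at (a,b) is the character t |-> t_a / t_b; its coroot is e_a - e_{a'}
   when b = a' (long root), and e_a - e_b + e_{b'} - e_{a'} otherwise. *)
Definition coroot (G : grp) (a b : 'I_(dimG G)) : vec G :=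
  if is_sp G && (b != rev_ord a)
  then ev a - ev b + ev (rev_ord b) - ev (rev_ord a)
  else ev a - ev b.

Definition in_XQ (G : grp) (v : vec G) : Prop :=
  if is_sp G then exists c : rat, forall a : 'I_(dimG G), co v a + co v (rev_ord a) = c
  else True.

Definition in_X (G : grp) (v : vec G) : Prop :=
  in_XQ v /\ forall a : 'I_(dimG G), co v a \is a Num.int.

Definition dominant (G : grp) (v : vec G) : Prop :=
  forall a b : 'I_(dimG G), (a <= b)%N -> co v b <= co v a.

Definition le_co (G : grp) (nu mu : vec G) : Prop :=
  exists c : 'I_(dimG G) -> 'I_(dimG G) -> rat,
    (forall a b, 0 <= c a b) /\
    mu - nu = \sum_(a : 'I_(dimG G)) \sum_(b : 'I_(dimG G) | (a < b)%N) c a b *: coroot a b.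

(* Standard Levi subgroups, given by the block sizes (m_1,...,m_r) and, for
   GSp_{2n}, the middle block 2j:  GL_n: M_(m_1..m_r);
   GSp_{2n}: GSp_{2n} cap M_(m_1..m_r,2j,m_r..m_1) (middle block omitted if j=0). *)
Definition std_levi (G : grp) (s : seq nat) (j : nat) : Prop :=
  all (fun m => (0 < m)%N) s /\
  (if is_sp G then (sumn s + j)%N = rankG G else sumn s = rankG G /\ j = 0%N).

Definition block_list (G : grp) (s : seq nat) (j : nat) : seq nat :=
  if is_sp G then s ++ (if j == 0%N then [::] else [:: j.*2]) ++ rev s else s.

(* index of the diagonal block containing position a *)
Definition blk (G : grp) (s : seq nat) (j : nat) (a : 'I_(dimG G)) : nat :=
  let L := block_list G s j in
  count (fun t => (t <= a)%N) [seq sumn (take k L) | k <- iota 1 (size L)].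

Definition same_blk (G : grp) (s : seq nat) (j : nat) (a b : 'I_(dimG G)) : bool :=
  blk s j a == blk s j b.

(* X_{M,Q} = X_*(A_M) (x) Q: elements of X_*(A)_Q constant on each block *)
Definition in_XMQ (G : grp) (s : seq nat) (j : nat) (v : vec G) : Prop :=
  in_XQ v /\ forall a b, same_blk s j a b -> co v a = co v b.

(* the roots of M are those with root space at (a,b), a <> b, in a diagonal
   block of M.  Coroot lattice of M (Z-span) and its Q-span. *)
Definition in_corootZ_M (G : grp) (s : seq nat) (j : nat) (v : vec G) : Prop :=
  exists c : 'I_(dimG G) -> 'I_(dimG G) -> int,
    v = \sum_(a : 'I_(dimG G)) \sum_(b : 'I_(dimG G) | same_blk s j a b && (a != b))
          coroot a b *~ c a b.

Definition in_corootQ_M (G : grp) (s : seq nat) (j : nat) (v : vec G) : Prop :=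
  exists c : 'I_(dimG G) -> 'I_(dimG G) -> rat,
    v = \sum_(a : 'I_(dimG G)) \sum_(b : 'I_(dimG G) | same_blk s j a b && (a != b))
          c a b *: coroot a b.

Definition M_dominant (G : grp) (s : seq nat) (j : nat) (v : vec G) : Prop :=
  forall a b : 'I_(dimG G), (a < b)%N -> same_blk s j a b -> co v b <= co v a.

(* M-minuscule: <v, alpha> in {0, 1, -1} for all roots alpha of M;
   <v, alpha_(a,b)> = v_a - v_b *)
Definition M_minuscule (G : grp) (s : seq nat) (j : nat) (v : vec G) : Prop :=
  forall a b : 'I_(dimG G), same_blk s j a b -> a != b ->
    (co v a - co v b == 0) || (co v a - co v b == 1) || (co v a - co v b == -1).

Definition weyl (G : grp) (w : 'S_(dimG G)) : Prop :=
  if is_sp G then forall a : 'I_(dimG G), w (rev_ord a) = rev_ord (w a) else True.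

Definition wact (G : grp) (w : 'S_(dimG G)) (v : vec G) : vec G :=
  \row_(a < dimG G) co v ((w^-1)%g a).

(* Let psum k v be the sum of the first k coordinates of v.  Then nu <= mu means
   that all psum k (mu - nu) are nonnegative and mu - nu lies in the span of the
   coroots (le_coP), so everything reduces to comparing partial sums.  With
   excess t f := sum_x max (f_x - t, 0), one has psum (i+1) f <= (i+1) t + excess t f
   for every t, with equality at t = g_i when f = g is nonincreasing; hence f is
   dominated by a sorted g as soon as excess (g i) f <= excess (g i) g for all i.
   On each block of M, nu is constant, while nut is integral, varies by at most one
   and has the same sum; so excess t nut = excess t nu for integral t, and this is
   at most excess t mu because nu <= mu.  As excess is invariant under permutation,
   taking t = mu_i gives [nut] <= mu.  On the other side, the M-dominant nut
   dominates nu block by block, and sorting it into [nut] only raises partial sums. *)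

From HB Require Import structures.
From mathcomp Require Import all_boot all_order all_algebra all_fingroup.
From mathcomp Require Import zify lra.
Set Implicit Arguments. Unset Strict Implicit. Unset Printing Implicit Defensive.
Import Order.TTheory GRing.Theory Num.Theory.
Local Open Scope ring_scope.

Lemma sum_max0 (R : realDomainType) (I : finType) (P : pred I) (h : I -> R) :
  (forall x, P x -> 0 <= h x) \/ (forall x, P x -> h x <= 0) ->
  \sum_(x | P x) Num.max (h x) 0 = Num.max (\sum_(x | P x) h x) 0.
Proof.
case=> [h_ge0 | h_le0].
  rewrite max_l ?sumr_ge0 //; apply: eq_bigr => x Px; exact/max_l/h_ge0.
rewrite max_r ?sumr_le0 // big1 // => x Px; exact/max_r/h_le0.
Qed.

Lemma int_ltr_addr1 (R : archiNumDomainType) (x y : R) :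
  x \is a Num.int -> y \is a Num.int -> x < y -> x + 1 <= y.
Proof.
move=> /intrP [m ->] /intrP [n ->]; rewrite ltr_int => lt_mn.
by rewrite -[1]/(1%:~R) -intrD ler_int lezD1.
Qed.

Lemma ler_nat_bool (R : numDomainType) (b1 b2 : bool) :
  (b1 -> b2) -> (b1%:R : R) <= b2%:R.
Proof. by case: b1 => // ->. Qed.

Lemma eq_rev_ord n (a b : 'I_n) : (rev_ord a == b) = (a == rev_ord b).
Proof. by rewrite -(inj_eq rev_ord_inj) rev_ordK. Qed.

Lemma sum_pair_delta (V : nmodType) (I : finType) (P : I -> pred I) (i0 j0 : I) (x : V) :
  P i0 j0 -> \sum_i \sum_(j | P i j) (if (i == i0) && (j == j0) then x else 0) = x.
Proof.
move=> Pij0; rewrite (bigD1 i0) //= (bigD1 j0) //= !eqxx big1 => [|j /andP [_ /negbTE ->]].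
  by rewrite addr0 big1 ?addr0 // => i /negbTE ->; rewrite big1.
by rewrite andbF.
Qed.

Section Majorization.

Variables (R : realDomainType) (N : nat).
Implicit Types (f g : 'I_N -> R) (t : R).

Definition psum k f : R := \sum_(x : 'I_N | (x < k)%N) f x.
Definition excess t f : R := \sum_x Num.max (f x - t) 0.
Definition nonincreasing f := forall a b : 'I_N, (a <= b)%N -> f b <= f a.

Lemma psum0 f : psum 0 f = 0.
Proof. by rewrite /psum big_pred0. Qed.

Lemma psum_min k f : psum (minn k N) f = psum k f.
Proof. by apply: eq_bigl => x; rewrite leq_min ltn_ord andbT. Qed.

Lemma psum_total k f : (N <= k)%N -> psum k f = \sum_x f x.
Proof. by move=> le_Nk; apply: eq_bigl => x; rewrite (leq_trans (ltn_ord x)). Qed.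

Lemma psumS (i : 'I_N) f : psum i.+1 f = psum i f + f i.
Proof.
rewrite /psum (bigD1 i) //= addrC; congr (_ + _); apply: eq_bigl => x.
by rewrite ltnS andbC -ltn_neqAle.
Qed.

Lemma psumB k f g : psum k (fun x => f x - g x) = psum k f - psum k g.
Proof. exact: sumrB. Qed.

Lemma psum_le_add_excess k t f : psum k f <= psum k (fun=> t) + excess t f.
Proof.
have le_split : psum k f <= \sum_(x : 'I_N | (x < k)%N) (t + Num.max (f x - t) 0).
  by apply: ler_sum => x _; rewrite -lerBlDl le_max lexx.
apply: le_trans le_split _.
rewrite big_split lerD2l [leRHS](bigID (fun x : 'I_N => (x < k)%N)) lerDl.
by apply: sumr_ge0 => x _; rewrite le_max lexx orbT.
Qed.

Lemma psum_nonincreasing (i : 'I_N) f : nonincreasing f ->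
  psum i.+1 f = psum i.+1 (fun=> f i) + excess (f i) f.
Proof.
move=> f_noninc; apply/eqP; rewrite addrC -subr_eq -psumB; apply/eqP.
rewrite /excess /psum big_mkcond /=.
apply: eq_bigr => x _; case: ltnP => [le_xi | lt_ix].
  by rewrite max_l // subr_ge0 f_noninc.
by rewrite max_r // subr_le0 f_noninc // ltnW.
Qed.

Lemma excess_perm t f (s : 'S_N) : excess t (f \o s) = excess t f.
Proof. by rewrite /excess [RHS](reindex_inj (@perm_inj _ s)). Qed.

Lemma excess_le_of_psum_le t f g : nonincreasing f ->
  (forall k, psum k f <= psum k g) -> excess t f <= excess t g.
Proof.
move=> f_noninc le_fg.
pose k := \max_(x : 'I_N | t < f x) (x : nat).+1.
have above_t x : (t < f x) = (x < k)%N.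
  apply/idP/idP => [t_lt|]; first exact: (leq_bigmax_cond (F := fun y : 'I_N => y.+1)).
  apply: contraLR; rewrite -leNgt -leqNgt => fx_le.
  apply/bigmax_leqP => y t_lt; rewrite ltnNge; apply/negP => le_xy.
  by have := le_lt_trans (f_noninc _ _ le_xy) (le_lt_trans fx_le t_lt); rewrite ltxx.
have -> : excess t f = psum k f - psum k (fun=> t).
  rewrite -psumB /psum /excess [RHS]big_mkcond /=; apply: eq_bigr => x _.
  rewrite -above_t; case: ltP => [lt_t|le_t]; first by rewrite max_l // subr_ge0 ltW.
  by rewrite max_r // subr_le0.
rewrite lerBlDr addrC; apply: le_trans (le_fg k) (psum_le_add_excess _ _ _).
Qed.

Lemma psum_le_of_excess_le f g : nonincreasing g ->
  (forall i, excess (g i) f <= excess (g i) g) -> forall k, psum k f <= psum k g.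
Proof.
move=> g_noninc le_fg k; rewrite -psum_min -[psum k g]psum_min.
case: (posnP (minn k N)) => [->|]; first by rewrite !psum0.
have : (minn k N <= N)%N by rewrite geq_minr.
case: (minn k N) => // i le_iN _.
have {le_iN} lt_iN : (i < N)%N by [].
rewrite -[i]/(nat_of_ord (Ordinal lt_iN)) (psum_nonincreasing _ g_noninc).
by apply: le_trans (psum_le_add_excess _ (g (Ordinal lt_iN)) _) _; rewrite lerD2l.
Qed.

Lemma psum_le_sorted f (s : 'S_N) : nonincreasing (f \o s) ->
  forall k, psum k f <= psum k (f \o s).
Proof. by move=> sorted; apply: psum_le_of_excess_le => // i; rewrite excess_perm. Qed.

End Majorization.

Section Blocks.

Variables (R : archiRealDomainType) (N : nat) (T : finType) (bl : 'I_N -> T).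
Variables nu nut : 'I_N -> R.
Hypothesis nu_const : forall a b, bl a = bl b -> nu a = nu b.
Hypothesis block_sums :
  forall i, \sum_(x | bl x == i) nut x = \sum_(x | bl x == i) nu x.
Hypothesis nut_sorted : forall a b, bl a = bl b -> (a < b)%N -> nut b <= nut a.
Hypothesis nut_spread : forall a b, bl a = bl b -> nut a - nut b <= 1.
Hypothesis nut_int : forall x, nut x \is a Num.int.

Lemma psum_le_blockwise k : psum k nu <= psum k nut.
Proof.
rewrite -subr_ge0 -psumB /psum (partition_big bl xpredT) //=.
apply: sumr_ge0 => i _; set g := fun x => nut x - nu x.
rewrite (eq_bigl (fun x => (bl x == i) && (x < k)%N)) => [|x]; last by rewrite andbC.
case: (boolP [exists x, [&& bl x == i, (x < k)%N & g x < 0]]); last first.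
  move=> /existsPn g_ge0; apply: sumr_ge0 => x /andP [blx lt_xk].
  by move: (g_ge0 x); rewrite blx lt_xk /= -leNgt.
move=> /existsP [x /and3P [/eqP blx lt_xk gx_lt0]].
have g_block0 : \sum_(y | bl y == i) g y = 0 by rewrite sumrB block_sums subrr.
move: g_block0; rewrite (bigID (fun y : 'I_N => (y < k)%N)) /= => /eqP.
rewrite addr_eq0 => /eqP ->; rewrite oppr_ge0.
apply: sumr_le0 => y /andP [/eqP bly]; rewrite -leqNgt => le_ky.
have same_yx : bl y = bl x by rewrite bly blx.
apply: le_trans (ltW gx_lt0); rewrite /g (nu_const same_yx) lerD2r.
exact: nut_sorted (esym same_yx) (leq_trans lt_xk le_ky).
Qed.

(* On a block, [nut - t] has constant sign by integrality and [nut_spread], and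
   so has [nu - t]; hence the block contributes [max (block sum) 0] to both. *)
Lemma excess_eq_blockwise t : t \is a Num.int -> excess t nut = excess t nu.
Proof.
move=> t_int; rewrite /excess (partition_big bl xpredT) //.
rewrite [RHS](partition_big bl xpredT) //=; apply: eq_bigr => i _.
rewrite !sum_max0 ?sumrB ?block_sums //.
  case: (boolP [exists y, (bl y == i) && (t <= nu y)]).
    move=> /existsP [y /andP [/eqP bly le_ty]]; left => x /eqP blx.
    by rewrite subr_ge0 (@nu_const x y) // blx bly.
  move=> /existsPn lt_t; right => x blx.
  by move: (lt_t x); rewrite blx -ltNge subr_le0 => /ltW.
case: (boolP [exists y, (bl y == i) && (nut y < t)]); last first.
  by move=> /existsPn le_t; left => x blx; move: (le_t x); rewrite blx -leNgt subr_ge0.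
move=> /existsP [y /andP [/eqP bly lt_yt]]; right => x /eqP blx.
rewrite subr_le0 (le_trans _ (int_ltr_addr1 (nut_int y) t_int lt_yt)) //.
by rewrite -lerBlDl (@nut_spread x y) // blx bly.
Qed.

Lemma psum_between (mu : 'I_N -> R) (s : 'S_N) :
  nonincreasing nu -> nonincreasing mu -> nonincreasing (nut \o s) ->
  (forall x, mu x \is a Num.int) -> (forall k, psum k nu <= psum k mu) ->
  forall k, psum k nu <= psum k (nut \o s) /\ psum k (nut \o s) <= psum k mu.
Proof.
move=> nu_sorted mu_sorted nuts_sorted mu_int le_nu_mu k; split.
  exact: le_trans (psum_le_blockwise k) (psum_le_sorted nuts_sorted k).
apply: psum_le_of_excess_le => // i.
rewrite excess_perm excess_eq_blockwise //.
exact: excess_le_of_psum_le.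
Qed.

End Blocks.

Definition block_of (L : seq nat) (a : nat) : nat :=
  count (fun t => (t <= a)%N) [seq sumn (take k L) | k <- iota 1 (size L)].

Lemma sumn_take_mono (L : seq nat) k k' :
  (k <= k')%N -> (sumn (take k L) <= sumn (take k' L))%N.
Proof.
move=> le_kk'; have -> : take k L = take k (take k' L) by rewrite take_takel.
by rewrite -{2}(cat_take_drop k (take k' L)) sumn_cat leq_addr.
Qed.

Lemma block_ofE (L : seq nat) a i : (i < size L)%N ->
  (sumn (take i L) <= a < sumn (take i.+1 L))%N -> block_of L a = i.
Proof.
move=> lt_iL /andP [lo hi]; rewrite /block_of count_map.
rewrite -(subnKC (ltnW lt_iL)) iotaD count_cat.
rewrite (@eq_in_count _ _ predT (iota 1 i)) => [|k]; last first.
  rewrite mem_iota => /andP [k_pos lt_k] /=.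
  by apply: leq_trans lo; apply: sumn_take_mono; rewrite -ltnS -add1n.
rewrite (@eq_in_count _ _ pred0 (iota (1 + i) _)) => [|k]; last first.
  rewrite mem_iota => /andP [le_ik _] /=; apply/negbTE; rewrite -ltnNge.
  exact: leq_trans hi (sumn_take_mono _ le_ik).
by rewrite count_predT count_pred0 size_iota addn0.
Qed.

Lemma nat_ivt (f : nat -> nat) m a : (f 0 <= a < f m)%N ->
  exists2 i, (i < m)%N & (f i <= a < f i.+1)%N.
Proof.
move=> /andP [f0 ]; elim: m => [|m IH] lt_a.
  by move: (leq_trans lt_a f0); rewrite ltnn.
case: (ltnP a (f m)) => [/IH [i lt_im bracket] | le_fm]; last by exists m; rewrite ?le_fm.
by exists i => //; apply: ltnW.
Qed.

Lemma sumn_take_rev (L : seq nat) k : rev L = L -> (k <= size L)%N ->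
  sumn (take (size L - k) L) = (sumn L - sumn (take k L))%N.
Proof.
move=> L_pal le_kL; rewrite -[in sumn L](cat_take_drop (size L - k) L) sumn_cat.
by rewrite -[X in drop _ X]L_pal drop_rev subKn // sumn_rev addnK.
Qed.

Lemma block_of_rev (L : seq nat) a : rev L = L -> (a < sumn L)%N ->
  block_of L (sumn L - a.+1) = (size L - (block_of L a).+1)%N.
Proof.
move=> L_pal lt_aL.
have [i lt_iL bracket] :
    exists2 i, (i < size L)%N & (sumn (take i L) <= a < sumn (take i.+1 L))%N.
  by apply: (nat_ivt (f := fun k => sumn (take k L))); rewrite take0 take_size.
rewrite (block_ofE lt_iL bracket); apply: block_ofE; first lia.
move: bracket => /andP [lo hi]; rewrite sumn_take_rev //.
have -> : (size L - i.+1).+1 = (size L - i)%N by lia.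
rewrite sumn_take_rev ?(ltnW lt_iL) //; apply/andP; split; lia.
Qed.

Section Coroots.

Variable G : grp.
Implicit Types (u v d : vec G) (a b : 'I_(dimG G)) (w : 'I_(dimG G) -> rat).

Lemma dimG_sp : is_sp G -> dimG G = (rankG G + rankG G)%N.
Proof. by case: G. Qed.

(* Partial sums, block sums and the sums [v_a + v_a'] are all pairings with
   weight vectors, so their linearity and their values on coroots come from here. *)
Definition pair w v : rat := \sum_x w x * co v x.

Lemma pair_is_scalar w : scalar (pair w).
Proof.
move=> c u v; rewrite /pair mulr_sumr -big_split; apply: eq_bigr => x _.
by rewrite /co !mxE mulrDr mulrCA.
Qed.

HB.instance Definition _ w :=
  GRing.isLinear.Build rat (vec G) rat *%R (pair w) (pair_is_scalar w).

Lemma pair_ev w a : pair w (ev a) = w a.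
Proof.
rewrite /pair (bigD1 a) //= big1 => [|x /negbTE neq_xa].
  by rewrite /co /ev mxE !eqxx mulr1 addr0.
by rewrite /co /ev mxE neq_xa mulr0.
Qed.

Lemma pair_delta v a : pair (fun x => (x == a)%:R) v = co v a.
Proof.
rewrite /pair (bigD1 a) //= eqxx mul1r big1 ?addr0 // => x /negbTE ->.
by rewrite mul0r.
Qed.

Lemma pair_coroot w a b : pair w (coroot a b) =
  if is_sp G && (b != rev_ord a) then w a - w b + w (rev_ord b) - w (rev_ord a)
  else w a - w b.
Proof. by rewrite /coroot; case: ifP => _; rewrite !(raddfB, raddfD) /= !pair_ev. Qed.

Lemma pair_sum_scale w (I J : finType) (P : I -> pred J) (c : I -> J -> rat) F :
  pair w (\sum_i \sum_(j | P i j) c i j *: F i j) =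
  \sum_i \sum_(j | P i j) c i j * pair w (F i j).
Proof.
rewrite raddf_sum; apply: eq_bigr => i _; rewrite raddf_sum; apply: eq_bigr => j _.
by rewrite /= linearZ_LR.
Qed.

Definition mirror_sum v (a : 'I_(dimG G)) : rat := co v a + co v (rev_ord a).
Definition first_half (k : nat) : bool := ~~ is_sp G || (k <= rankG G)%N.
Definition in_coroot_span d : Prop :=
  psum (dimG G) (co d) = 0 /\ (is_sp G -> forall a, mirror_sum d a = 0).
Definition coroot_cone d : Prop :=
  (forall k, 0 <= psum k (co d)) /\ in_coroot_span d.

Lemma co_sub u v a : co (u - v) a = co u a - co v a.
Proof. by rewrite /co !mxE. Qed.

Lemma psum_co_sub k u v : psum k (co (u - v)) = psum k (co u) - psum k (co v).
Proof. by rewrite -psumB; apply: eq_bigr => x _; rewrite co_sub. Qed.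

Lemma mirror_sum_sub u v a : mirror_sum (u - v) a = mirror_sum u a - mirror_sum v a.
Proof. by rewrite /mirror_sum !co_sub addrACA opprD. Qed.

Lemma mirror_sum_add u v a : mirror_sum (u + v) a = mirror_sum u a + mirror_sum v a.
Proof. by rewrite /mirror_sum /co !mxE addrACA. Qed.

Lemma psum_co_add k u v : psum k (co (u + v)) = psum k (co u) + psum k (co v).
Proof. by rewrite -big_split; apply: eq_bigr => x _; rewrite /co mxE. Qed.

Lemma coroot_spanD u v : in_coroot_span u -> in_coroot_span v -> in_coroot_span (u + v).
Proof.
move=> [tot_u mirror_u] [tot_v mirror_v]; split => [|sp a].
  by rewrite psum_co_add tot_u tot_v addr0.
by rewrite mirror_sum_add mirror_u ?mirror_v ?addr0.
Qed.

Lemma coroot_spanB u v : in_coroot_span u -> in_coroot_span v -> in_coroot_span (u - v).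
Proof.
move=> [tot_u mirror_u] [tot_v mirror_v]; split => [|sp a].
  by rewrite psum_co_sub tot_u tot_v subrr.
by rewrite mirror_sum_sub mirror_u ?mirror_v ?subrr.
Qed.

Lemma psum_pair k v : psum k (co v) = pair (fun x => (x < k)%:R) v.
Proof.
rewrite /psum /pair big_mkcond; apply: eq_bigr => x _.
by case: ifP; rewrite ?mul1r ?mul0r.
Qed.

Lemma mirror_sum_pair v a :
  mirror_sum v a = pair (fun x => (x == a)%:R + (x == rev_ord a)%:R) v.
Proof.
rewrite /mirror_sum -[co v a]pair_delta -[co v (rev_ord a)]pair_delta.
by rewrite /pair -big_split; apply: eq_bigr => x _; rewrite mulrDl.
Qed.

Lemma psum_coroot_ge0 k a b : (a < b)%N -> 0 <= psum k (co (coroot a b)).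
Proof.
move=> lt_ab; rewrite psum_pair pair_coroot.
have le_ba : ((b < k)%N%:R : rat) <= (a < k)%N%:R.
  by apply: ler_nat_bool; apply: ltn_trans.
have le_rev : ((rev_ord a < k)%N%:R : rat) <= (rev_ord b < k)%N%:R.
  have b_ltN := ltn_ord b.
  apply: ler_nat_bool; apply: leq_ltn_trans; rewrite /=; lia.
by case: ifP => _; lra.
Qed.

Lemma psum_coroot_total a b : psum (dimG G) (co (coroot a b)) = 0.
Proof. by rewrite psum_pair pair_coroot !ltn_ord; case: ifP => _; lra. Qed.

Lemma pair_coroot_sym w a b :
  is_sp G -> (forall x, w (rev_ord x) = w x) -> pair w (coroot a b) = 0.
Proof.
move=> sp w_sym; rewrite pair_coroot sp /= !w_sym.
by case: ifP => [_ | /negbFE/eqP ->]; rewrite ?w_sym; lra.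
Qed.

Lemma mirror_sum_coroot a b c : is_sp G -> mirror_sum (coroot a b) c = 0.
Proof.
move=> sp; rewrite mirror_sum_pair; apply: pair_coroot_sym => // x.
by rewrite !eq_rev_ord rev_ordK addrC.
Qed.

Lemma psum_simple_coroot k a b : (b : nat) = a.+1 ->
  first_half b -> first_half k -> psum k (co (coroot a b)) = (k == b)%:R.
Proof.
move=> b_succ half_b half_k; rewrite psum_pair pair_coroot /=.
have -> : (a < k)%N = (b <= k)%N by rewrite b_succ.
have simple : (((b <= k)%N%:R - (b < k)%N%:R) : rat) = (k == b)%:R.
  by case: ltngtP; rewrite ?subrr ?subr0.
case: ifP => [/andP [sp not_long] | _] //.
move: half_b half_k not_long; rewrite /first_half sp -val_eqE /= => half_b half_k.
have N2n := dimG_sp sp; have b_ltN := ltn_ord b.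
move=> /eqP not_long; have b_lt_n : (b < rankG G)%N by lia.
have -> : (rev_ord b < k)%N = false by apply/negbTE; rewrite /= -leqNgt; lia.
have -> : (rev_ord a < k)%N = false by apply/negbTE; rewrite /= -leqNgt; lia.
by rewrite -simple addr0 subr0.
Qed.

Lemma pair_coroot_comb_eq0 w (P : 'I_(dimG G) -> pred 'I_(dimG G)) c :
  (forall a b, P a b -> pair w (coroot a b) = 0) ->
  pair w (\sum_a \sum_(b | P a b) c a b *: coroot a b) = 0.
Proof.
move=> w0; rewrite pair_sum_scale big1 // => a _.
by rewrite big1 // => b Pab; rewrite w0 ?mulr0.
Qed.

Lemma le_co_cone nu mu : le_co nu mu -> coroot_cone (mu - nu).
Proof.
move=> [c [c_ge0 ->]]; split => [k | ]; last split => [ | sp a].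
- rewrite psum_pair pair_sum_scale.
  apply: sumr_ge0 => a _; apply: sumr_ge0 => b lt_ab.
  by rewrite mulr_ge0 // -psum_pair psum_coroot_ge0.
- rewrite psum_pair pair_coroot_comb_eq0 // => a b _.
  by rewrite -psum_pair psum_coroot_total.
- rewrite mirror_sum_pair pair_coroot_comb_eq0 // => a' b _.
  by rewrite -mirror_sum_pair mirror_sum_coroot.
Qed.

Lemma first_halfW k : first_half k.+1 -> first_half k.
Proof. by rewrite /first_half; case: is_sp => //=; apply: ltnW. Qed.

Lemma eq0_of_psum v : (forall k, first_half k -> psum k (co v) = 0) ->
  (is_sp G -> forall a, mirror_sum v a = 0) -> v = 0.
Proof.
move=> psum_v0 mirror_v0.
have co_v0 (z : 'I_(dimG G)) : first_half z.+1 -> co v z = 0.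
  move=> half_z; have := psumS z (co v).
  by rewrite !psum_v0 ?(first_halfW half_z) // => /esym; rewrite add0r.
apply/rowP => z; rewrite mxE -/(co v z).
case: (boolP (first_half z.+1)) => [|]; first exact: co_v0.
rewrite /first_half negb_or negbK -ltnNge => /andP [sp lt_nz].
have N2n := dimG_sp sp; have z_ltN := ltn_ord z.
have := mirror_v0 sp z; rewrite /mirror_sum (co_v0 (rev_ord z)) ?addr0 //.
by rewrite /first_half sp /=; lia.
Qed.

(* The simple coroot (b - 1, b) gets the coefficient [psum b]; for GSp_{2n} the
   simple coroots are those with b <= n, the last one being long. *)
Definition simple_coef d a b : rat :=
  if ((b : nat) == a.+1) && first_half b then psum b (co d) else 0.

Lemma psum_simple_comb d k : first_half k -> psum (dimG G) (co d) = 0 ->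
  psum k (co (\sum_(a : 'I_(dimG G)) \sum_(b : 'I_(dimG G) | (a < b)%N)
                simple_coef d a b *: coroot a b)) = psum k (co d).
Proof.
move=> half_k psum_tot; have [-> | k_pos] := posnP k; first by rewrite !psum0.
have [le_Nk | lt_kN] := leqP (dimG G) k.
  rewrite -psum_min -[RHS]psum_min (minn_idPr le_Nk) psum_tot psum_pair.
  by rewrite pair_coroot_comb_eq0 // => a b _; rewrite -psum_pair psum_coroot_total.
have lt_pred : (k.-1 < dimG G)%N by rewrite (leq_ltn_trans (leq_pred k)).
pose a0 := Ordinal lt_pred; pose b0 := Ordinal lt_kN.
rewrite psum_pair pair_sum_scale.
rewrite -[RHS](@sum_pair_delta _ _ (fun a b => (a < b)%N) a0 b0) /=; last by rewrite prednK.
apply: eq_bigr => a _; apply: eq_bigr => b lt_ab; rewrite -psum_pair /simple_coef.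
case: ifP => [/andP [/eqP b_succ half_b] | not_simple].
  rewrite psum_simple_coroot // -!val_eqE /=.
  case: (eqVneq k b) => [k_b | ]; last by rewrite mulr0 andbF.
  by rewrite k_b b_succ /= !eqxx mulr1.
rewrite mul0r; case: ifP => // /andP [/eqP a_a0 /eqP b_b0].
by move: not_simple; rewrite a_a0 b_b0 /= prednK // eqxx half_k.
Qed.

Lemma cone_le_co nu mu : coroot_cone (mu - nu) -> le_co nu mu.
Proof.
move=> [psum_ge0 [psum_tot mirror0]]; exists (simple_coef (mu - nu)).
split => [a b | ]; first by rewrite /simple_coef; case: ifP.
apply/eqP; rewrite eq_sym -subr_eq0; apply/eqP; apply: eq0_of_psum => [k half_k | sp a].
  by rewrite psum_co_sub psum_simple_comb ?subrr.
rewrite mirror_sum_sub mirror0 // subr0 mirror_sum_pair pair_coroot_comb_eq0 // => a' b _.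
by rewrite -mirror_sum_pair mirror_sum_coroot.
Qed.

Lemma le_coP nu mu : le_co nu mu <-> coroot_cone (mu - nu).
Proof. by split; [apply: le_co_cone | apply: cone_le_co]. Qed.

Lemma co_wact (p : 'S_(dimG G)) v a : co (wact p v) a = co v ((p^-1)%g a).
Proof. by rewrite /co /wact mxE. Qed.

Lemma weyl_invE (p : 'S_(dimG G)) a : is_sp G -> weyl p ->
  (p^-1)%g (rev_ord a) = rev_ord ((p^-1)%g a).
Proof.
move=> sp; rewrite /weyl sp => /(_ ((p^-1)%g a)); rewrite permKV => <-.
by rewrite permK.
Qed.

Lemma coroot_span_wact (p : 'S_(dimG G)) v : weyl p -> in_XQ v ->
  in_coroot_span (wact p v - v).
Proof.
move=> p_weyl v_XQ; split => [|sp a].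
  rewrite psum_co_sub !psum_total //; apply/eqP; rewrite subr_eq0; apply/eqP.
  by rewrite (reindex_inj (@perm_inj _ p)); apply: eq_bigr => x _; rewrite co_wact permK.
move: v_XQ; rewrite /in_XQ sp => -[c v_c].
by rewrite mirror_sum_sub /mirror_sum !co_wact weyl_invE // !v_c subrr.
Qed.

End Coroots.

Section Levi.

Variables (G : grp) (s : seq nat) (j : nat).
Hypothesis levi : std_levi G s j.
Local Notation L := (block_list G s j).
Implicit Types (v : vec G) (a b : 'I_(dimG G)) (w : 'I_(dimG G) -> rat).

Lemma blkE a : blk s j a = block_of L a.
Proof. by []. Qed.

Lemma blk_lt a : (blk s j a < (size L).+1)%N.
Proof. by rewrite blkE ltnS (leq_trans (count_size _ _)) // size_map size_iota. Qed.

Lemma block_list_pal : is_sp G -> rev L = L.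
Proof.
rewrite /block_list => ->; rewrite !rev_cat revK catA; congr (_ ++ _).
by case: (j == 0%N).
Qed.

Lemma sumn_block_list : sumn L = dimG G.
Proof.
move: levi; case: G => n [_] /=; rewrite /block_list /=; first by case.
rewrite !sumn_cat sumn_rev => sum_sj; case: eqP => [j0|_] /=; lia.
Qed.

Lemma blk_rev a : is_sp G -> blk s j (rev_ord a) = (size L - (blk s j a).+1)%N.
Proof.
move=> sp; rewrite !blkE; have := block_of_rev (block_list_pal sp).
by rewrite sumn_block_list; apply; apply: ltn_ord.
Qed.

Lemma block_sum_pair i v :
  \sum_(x | blk s j x == i) co v x = pair (fun x => (blk s j x == i)%:R) v.
Proof.
rewrite /pair [RHS](bigID (fun x => blk s j x == i)) /= [X in _ + X]big1 ?addr0.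
  by apply: eq_bigr => x ->; rewrite mul1r.
by move=> x /negbTE ->; rewrite mul0r.
Qed.

Lemma block_sum_coroot i a b : same_blk s j a b ->
  \sum_(x | blk s j x == i) co (coroot a b) x = 0.
Proof.
move=> /eqP same_ab; rewrite block_sum_pair pair_coroot /= same_ab.
by case: ifP => [/andP [sp _] | _]; rewrite ?(blk_rev _ sp) ?same_ab; lra.
Qed.

Lemma pair_corootM_eq0 w v : (forall a b, same_blk s j a b -> pair w (coroot a b) = 0) ->
  in_corootQ_M s j v -> pair w v = 0.
Proof. by move=> w0 [c ->]; apply: pair_coroot_comb_eq0 => a b /andP [/w0]. Qed.

Lemma corootZ_corootQ v : in_corootZ_M s j v -> in_corootQ_M s j v.
Proof.
move=> [c ->]; exists (fun a b => (c a b)%:~R).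
by apply: eq_bigr => a _; apply: eq_bigr => b _; rewrite scaler_int.
Qed.

Section SameKappa.

Variables (nu nut lam : vec G).
Hypotheses (nu_lam : in_corootQ_M s j (nu - lam)) (nut_lam : in_corootZ_M s j (nut - lam)).

Lemma pair_same_kappa w : (forall a b, same_blk s j a b -> pair w (coroot a b) = 0) ->
  pair w nut = pair w nu.
Proof.
move=> w0; have := pair_corootM_eq0 w0 nu_lam.
have := pair_corootM_eq0 w0 (corootZ_corootQ nut_lam).
by rewrite !raddfB /= => /eqP; rewrite subr_eq0 => /eqP -> /eqP; rewrite subr_eq0 => /eqP.
Qed.

Lemma block_sums_same_kappa i :
  \sum_(x | blk s j x == i) co nut x = \sum_(x | blk s j x == i) co nu x.
Proof.
rewrite !block_sum_pair; apply: pair_same_kappa => a b same_ab.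
by rewrite -block_sum_pair block_sum_coroot.
Qed.

Lemma coroot_span_same_kappa : in_coroot_span (nut - nu).
Proof.
split => [|sp a].
  rewrite psum_co_sub !psum_pair pair_same_kappa ?subrr // => a b _.
  by rewrite -psum_pair psum_coroot_total.
rewrite mirror_sum_sub !mirror_sum_pair pair_same_kappa ?subrr // => a' b _.
by rewrite -mirror_sum_pair mirror_sum_coroot.
Qed.

Lemma psum_wact_between (mu : vec G) (p : 'S_(dimG G)) :
  (forall a b, same_blk s j a b -> co nu a = co nu b) -> dominant nu ->
  M_dominant s j nut -> M_minuscule s j nut -> (forall x, co nut x \is a Num.int) ->
  dominant (wact p nut) -> dominant mu -> (forall x, co mu x \is a Num.int) ->
  (forall k, psum k (co nu) <= psum k (co mu)) ->
  forall k, psum k (co nu) <= psum k (co (wact p nut)) <= psum k (co mu).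
Proof.
move=> nu_const nu_dom nut_Mdom nut_Mmin nut_int nutd_dom mu_dom mu_int psum_le k.
pose bl a := Ordinal (blk_lt a).
have same_bl a b : bl a = bl b -> same_blk s j a b by move=> /(congr1 val) /eqP.
have nu_bl_const a b : bl a = bl b -> co nu a = co nu b by move/same_bl; apply: nu_const.
have block_sums i : \sum_(x | bl x == i) co nut x = \sum_(x | bl x == i) co nu x.
  by rewrite -!(eq_bigl _ _ (fun x => val_eqE (bl x) i)) block_sums_same_kappa.
have nut_bl_sorted a b : bl a = bl b -> (a < b)%N -> co nut b <= co nut a.
  by move/same_bl => same_ab lt_ab; apply: nut_Mdom.
have nut_bl_spread a b : bl a = bl b -> co nut a - co nut b <= 1.
  move/same_bl => same_ab; have [-> | neq_ab] := eqVneq a b; first by rewrite subrr ler01.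
  case/orP: (nut_Mmin a b same_ab neq_ab) => [/orP [] | ] /eqP ->;
    by rewrite ?ler01 ?lexx // lerN10.
have nutd_sorted : nonincreasing (co nut \o (p^-1)%g).
  by move=> a b le_ab; rewrite /= -!co_wact; apply: nutd_dom.
have psum_wact : psum k (co (wact p nut)) = psum k (co nut \o (p^-1)%g).
  by apply: eq_bigr => x _; rewrite co_wact.
rewrite psum_wact; apply/andP.
exact: (psum_between nu_bl_const block_sums nut_bl_sorted nut_bl_spread nut_int
  nu_dom mu_dom nutd_sorted mu_int psum_le k).
Qed.

End SameKappa.

End Levi.

Theorem proposition4p8 (G : grp) (s : seq nat) (j : nat) (nu : vec G) :
  std_levi G s j ->
  in_XMQ s j nu -> dominant nu ->
  (* kappa_M (x) Q (nu) lies in pi_1(M) *)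
  (exists lam : vec G, in_X lam /\ in_corootQ_M s j (nu - lam)) ->
  forall nut : vec G,
    in_X nut -> M_dominant s j nut -> M_minuscule s j nut ->
    (* kappa_M(nut) = kappa_M(nu) *)
    (exists lam : vec G, in_X lam /\ in_corootQ_M s j (nu - lam) /\
                         in_corootZ_M s j (nut - lam)) ->
  forall nutd : vec G,
    dominant nutd -> (exists w : 'S_(dimG G), weyl w /\ nutd = wact w nut) ->
  forall mu : vec G, in_X mu -> dominant mu -> le_co nu mu ->
    le_co nu nutd /\ le_co nutd mu.
Proof.
move=> levi [_ nu_const] nu_dom _ nut [nut_XQ nut_int] nut_Mdom nut_Mmin
  [lam [_ [nu_lam nut_lam]]] nutd nutd_dom [p [p_weyl nutdE]] mu [_ mu_int] mu_dom
  /le_coP [psum_mu_nu span_mu_nu]; subst nutd.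
have span_nutd_nu : in_coroot_span (wact p nut - nu).
  have -> : wact p nut - nu = (wact p nut - nut) + (nut - nu) by rewrite addrA subrK.
  exact: coroot_spanD (coroot_span_wact p_weyl nut_XQ)
    (coroot_span_same_kappa nu_lam nut_lam).
have psum_nu_mu k : psum k (co nu) <= psum k (co mu) by rewrite -subr_ge0 -psum_co_sub.
have between := psum_wact_between levi nu_lam nut_lam nu_const nu_dom nut_Mdom nut_Mmin
  nut_int nutd_dom mu_dom mu_int psum_nu_mu.
split; apply/le_coP; split => [k | ].
- by rewrite psum_co_sub subr_ge0; case/andP: (between k).
- exact: span_nutd_nu.
- by rewrite psum_co_sub subr_ge0; case/andP: (between k).
- have -> : mu - wact p nut = (mu - nu) - (wact p nut - nu) by rewrite opprB addrA subrK.
  exact: coroot_spanB span_mu_nu span_nutd_nu.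
Qed.
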